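(* Let $r>0$ and let $S$ be a finite set of sites in $\mathbb{H}^2$ with pairwise hyperbolic distance at least $2r$. Then every inner vertex of the Delaunay complex $\mathcal{D}(S)$ (i.e., every site whose Voronoi cell is bounded) has degree at least $e^r$ in $\mathcal{D}(S)$.
   Context: $\mathbb{H}^2$ is the hyperbolic plane of curvature $-1$. For a finite $S\subset\mathbb{H}^2$, the Voronoi cell of $s\in S$ is the set of points of $\mathbb{H}^2$ closer to $s$ than to any other site. The Delaunay complex $\mathcal{D}(S)$ is the graph on $S$ in which two sites are adjacent iff their Voronoi cells share a boundary segment of positive length (a Voronoi edge); it is a plane graph when each edge is drawn through a point of the shared Voronoi edge, and a site is an outer vertex (lies on the unbounded face) iff its Voronoi cell is unbounded. *)

(* concrete reals R. Upper half-plane model of H^2 (curvature -1). *)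
From Stdlib Require Import Reals List.
Open Scope R_scope.

Definition pt : Type := (R * R)%type.

Definition inH (p : pt) : Prop := 0 < snd p.

(* hyperbolic distance: arcosh(1 + |p-q|^2 / (2 y_p y_q)), arcosh c = ln (c + sqrt(c^2-1)) *)
Definition hdist (p q : pt) : R :=
  let c := 1 + ((fst p - fst q) ^ 2 + (snd p - snd q) ^ 2) / (2 * snd p * snd q) in
  ln (c + sqrt (c * c - 1)).

Definition voronoi (S : list pt) (s : pt) (x : pt) : Prop :=
  inH x /\ forall t, In t S -> t <> s -> hdist x s < hdist x t.

Definition hclosure (A : pt -> Prop) (x : pt) : Prop :=
  inH x /\ forall eps, 0 < eps -> exists y, A y /\ hdist x y < eps.

Definition hsegment (a b z : pt) : Prop :=
  inH z /\ hdist a z + hdist z b = hdist a b.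

(* Delaunay adjacency: the Voronoi cells of s and t share a boundary segment of positive length *)
Definition delaunay_adj (S : list pt) (s t : pt) : Prop :=
  s <> t /\
  exists a b, inH a /\ inH b /\ a <> b /\
    forall z, hsegment a b z ->
      hclosure (voronoi S s) z /\ hclosure (voronoi S t) z.

Definition bounded_cell (S : list pt) (s : pt) : Prop :=
  exists M, forall x, voronoi S s x -> hdist s x <= M.

From Stdlib Require Import Reals List Lra Lia Psatz Classical.
Open Scope R_scope.

(* Work in the hyperboloid model, in the Lorentz frame that puts the site [s]
   at (1, 0, 0), and in the Klein disk of that frame.  There the Voronoi cell of [s] is the
   intersection of the half-planes [T1 k1 + T2 k2 < T0 - 1], one for each other site with
   hyperboloid coordinates (T0, T1, T2).  As the cell is bounded, every ray from the centre
   in a direction [u] leaves it, through the bisector that it meets first; tilting the ray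
   slightly traces a chord of that bisector on the boundary of the cell, so the
   corresponding site is a Delaunay neighbour whose cap [{u | T1 u1 + T2 u2 >= T0 - 1}]
   contains [u].  The caps of the neighbours thus cover the unit circle.  A site at
   distance at least [2 r] has [T0 >= cosh (2 r)], so its cap has angular radius [alpha]
   with [sin alpha <= 1 / cosh r]; if there were [m < e^r] neighbours, each cap would contain
   at most two of [3 m] equally spaced directions, which is absurd. *)

(** * The inverse hyperbolic cosine *)

Definition arcosh (c : R) : R := ln (c + sqrt (c * c - 1)).

Lemma sqrt_sq_sub1 (c : R) : 1 <= c -> sqrt (c * c - 1) * sqrt (c * c - 1) = c * c - 1.
Proof. intros; apply sqrt_sqrt; nra. Qed.

Lemma exp_arcosh (c : R) : 1 <= c -> exp (arcosh c) = c + sqrt (c * c - 1).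
Proof.
  intros Hc. unfold arcosh. rewrite exp_ln; auto.
  pose proof (sqrt_pos (c * c - 1)); lra.
Qed.

Lemma arcosh_increasing (c1 c2 : R) : 1 <= c1 -> c1 < c2 -> arcosh c1 < arcosh c2.
Proof.
  intros H1 H12. unfold arcosh. apply ln_increasing.
  - pose proof (sqrt_pos (c1 * c1 - 1)); lra.
  - assert (Hsq : sqrt (c1 * c1 - 1) <= sqrt (c2 * c2 - 1)) by (apply sqrt_le_1_alt; nra).
    lra.
Qed.

Lemma arcosh_lt_iff (c1 c2 : R) : 1 <= c1 -> 1 <= c2 -> arcosh c1 < arcosh c2 <-> c1 < c2.
Proof.
  intros H1 H2. split; [|now apply arcosh_increasing].
  intros Hlt. destruct (Rlt_or_le c1 c2) as [|Hle]; auto.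
  destruct (Req_dec c1 c2) as [->|]; [lra|].
  pose proof (arcosh_increasing c2 c1 H2 ltac:(lra)); lra.
Qed.

Lemma le_exp_of_arcosh_le (c M : R) : 1 <= c -> arcosh c <= M -> c <= exp M.
Proof.
  intros Hc HM. pose proof (exp_arcosh c Hc). pose proof (sqrt_pos (c * c - 1)).
  assert (exp (arcosh c) <= exp M) by (destruct HM as [HM| ->]; [left; apply exp_increasing|]; lra).
  lra.
Qed.

(* Both [c + sqrt (c^2 - 1)] and [exp x] have product [1] with their conjugates. *)
Lemma cosh_le_of_le_arcosh (x c : R) : 0 <= x -> 1 <= c -> x <= arcosh c -> cosh x <= c.
Proof.
  intros Hx Hc Hle. unfold cosh. rewrite exp_Ropp.
  set (q := exp x). set (e := c + sqrt (c * c - 1)). set (e' := c - sqrt (c * c - 1)).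
  assert (Hq : q <= e).
  { unfold q, e. rewrite <- exp_arcosh by lra.
    destruct Hle as [Hlt| ->]; [left; apply exp_increasing|]; lra. }
  assert (Hq1 : 1 <= q) by (unfold q; rewrite <- exp_0; destruct Hx as [Hx|<-]; [left; apply exp_increasing|]; lra).
  pose proof (sqrt_sq_sub1 c Hc). pose proof (sqrt_pos (c * c - 1)).
  assert (Hee : e * e' = 1) by (unfold e, e'; nra).
  assert (Hqq : q * / q = 1) by (field; lra).
  assert (0 < / q) by (apply Rinv_0_lt_compat; lra).
  assert (Hc2 : c = (e + e') / 2) by (unfold e, e'; lra).
  rewrite Hc2. assert (0 < e') by nra.
  assert (/ q * e' <= 1) by nra.
  nra.
Qed.

Lemma arcosh_lt_near_one (eps : R) : 0 < eps ->
  exists d, 0 < d /\ forall c, 1 <= c -> c < 1 + d -> arcosh c < eps.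
Proof.
  intros Heps. assert (1 < exp eps) by (rewrite <- exp_0; apply exp_increasing; lra).
  set (g := exp eps - 1) in *. assert (0 < g) by (unfold g; lra).
  exists (Rmin 1 (g ^ 2 / 16)). split; [apply Rmin_pos; [lra | apply Rmult_lt_0_compat; [apply pow_lt |]; lra] |].
  intros c Hc Hsmall. unfold arcosh. rewrite <- (ln_exp eps). apply ln_increasing.
  - pose proof (sqrt_pos (c * c - 1)); lra.
  - replace (exp eps) with (1 + g) by (unfold g; lra).
    pose proof (sqrt_sq_sub1 c Hc). pose proof (sqrt_pos (c * c - 1)).
    set (q := sqrt (c * c - 1)) in *.
    assert (c - 1 < 1) by (pose proof (Rmin_l 1 (g ^ 2 / 16)); lra).
    assert (c - 1 < g ^ 2 / 16) by (pose proof (Rmin_r 1 (g ^ 2 / 16)); lra).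
    assert (q * q < g * g / 4) by nra.
    assert (q < g / 2) by nra.
    destruct (Rle_lt_dec g 4); nra.
Qed.

(* Multiply [exp] of both sides and use the conjugates [c - sqrt (c^2 - 1)]. *)
Lemma arcosh_add (x y c : R) : 1 <= x -> 1 <= y -> 1 <= c ->
  arcosh x + arcosh y = arcosh c -> c = x * y + sqrt (x * x - 1) * sqrt (y * y - 1).
Proof.
  intros Hx Hy Hc Hsum.
  assert (Hexp : exp (arcosh x + arcosh y) = exp (arcosh c)) by now rewrite Hsum.
  rewrite exp_plus, !exp_arcosh in Hexp by assumption.
  pose proof (sqrt_sq_sub1 x Hx). pose proof (sqrt_sq_sub1 y Hy). pose proof (sqrt_sq_sub1 c Hc).
  pose proof (sqrt_pos (x * x - 1)). pose proof (sqrt_pos (y * y - 1)). pose proof (sqrt_pos (c * c - 1)).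
  set (sx := sqrt (x * x - 1)) in *. set (sy := sqrt (y * y - 1)) in *. set (sc := sqrt (c * c - 1)) in *.
  assert (Hconj : (x - sx) * (y - sy) = c - sc).
  { apply (Rmult_eq_reg_l (c + sc)); [| nra].
    replace ((c + sc) * (c - sc)) with 1 by nra. rewrite <- Hexp.
    transitivity (((x + sx) * (x - sx)) * ((y + sy) * (y - sy))); [ring | nra]. }
  nra.
Qed.

(** * Lexicographic maxima and uniformly small parameters *)

Lemma eventually_forall_in (A : Type) (l : list A) (Q : A -> R -> Prop) :
  (forall a, In a l -> exists e, 0 < e /\ forall h, 0 < h < e -> Q a h) ->
  exists e, 0 < e /\ forall a, In a l -> forall h, 0 < h < e -> Q a h.
Proof.
  induction l as [|a l IH]; intros Hl.
  - exists 1; split; [lra | intros a []].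
  - destruct IH as [e1 [He1 H1]]; [intros; apply Hl; simpl; auto |].
    destruct (Hl a (or_introl eq_refl)) as [e2 [He2 H2]].
    exists (Rmin e1 e2); split; [now apply Rmin_pos |].
    pose proof (Rmin_l e1 e2). pose proof (Rmin_r e1 e2).
    intros b [<-|Hb] h Hh; [apply H2 | apply H1]; auto; lra.
Qed.

Lemma affine_pos_near (a b : R) : 0 < a -> exists e, 0 < e /\ forall h, 0 < h < e -> 0 < a - h * b.
Proof.
  intros Ha. pose proof (Rabs_pos b). pose proof (Rle_abs b).
  exists (a / (Rabs b + 1)). split; [apply Rdiv_lt_0_compat; lra |].
  intros h [Hh0 Hh]. apply (Rmult_lt_compat_r (Rabs b + 1)) in Hh; [| lra].
  replace (a / (Rabs b + 1) * (Rabs b + 1)) with a in Hh by (field; lra). nra.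
Qed.

Lemma exists_lex_max (A : Type) (l : list A) (P : A -> Prop) (e d : A -> R) :
  (exists a, In a l /\ P a) ->
  exists b, In b l /\ P b /\ forall a, In a l -> P a -> e a < e b \/ (e a = e b /\ d a <= d b).
Proof.
  induction l as [|a l IH]; intros [a0 [Ha0 HPa0]]; [destruct Ha0 |].
  destruct (classic (exists a', In a' l /\ P a')) as [Hex|Hnex].
  - destruct (IH Hex) as [b [Hb [HPb Hmax]]].
    assert (Hb' : In b (a :: l) /\ P b) by (split; simpl; auto).
    destruct (classic (P a)) as [HPa|HPa].
    + destruct (total_order_T (e a) (e b)) as [[Hlt|Heq]|Hgt].
      * exists b. split; [apply Hb' | split; auto]. intros x [<-|Hx] HPx; auto.
      * destruct (Rle_lt_dec (d a) (d b)).
        -- exists b. split; [apply Hb' | split; auto]. intros x [<-|Hx] HPx; auto.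
        -- exists a. split; [simpl; auto | split; auto]. intros x [<-|Hx] HPx; [right; split; lra |].
           destruct (Hmax x Hx HPx) as [|[]]; [left | right; split]; lra.
      * exists a. split; [simpl; auto | split; auto]. intros x [<-|Hx] HPx; [right; split; lra |].
        destruct (Hmax x Hx HPx) as [|[]]; left; lra.
    + exists b. split; [apply Hb' | split; auto]. intros x [<-|Hx] HPx; [contradiction | auto].
  - assert (HPa : P a) by (destruct Ha0 as [<-|Ha0]; auto; exfalso; apply Hnex; eauto).
    exists a. split; [simpl; auto | split; auto]. intros x [<-|Hx] HPx; [right; split; lra |].
    exfalso; apply Hnex; eauto.
Qed.

(** * Caps covering the unit circle *)

Lemma sin_ge_cubic (x : R) : 0 <= x -> x <= 2 -> x - x * x * x / 6 <= sin x.
Proof.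
  intros Hx0 Hx2. assert (Hpi : x <= PI) by (pose proof PI2_3_2; lra).
  destruct (SIN x Hx0 Hpi) as [Hlb _].
  unfold sin_lb, sin_approx, sin_term in Hlb. simpl in Hlb. unfold INR in Hlb. simpl in Hlb.
  assert (x * x * x * x * x / 120 - x * x * x * x * x * x * x / 5040 >= 0); [| lra].
  assert (0 <= x * x * x * x * x) by (repeat apply Rmult_le_pos; lra).
  assert (x * x <= 4) by nra.
  assert (x * x * x * x * x * x * x = (x * x * x * x * x) * (x * x)) by ring. nra.
Qed.

(* With [E = exp r], [2 E / (E^2 + 1) = 1 / cosh r] and [(E^2 + E^-2) / 2 = cosh (2 r)]. *)
Lemma inv_cosh_lt_sin (M E : R) : 2 <= M -> M < E -> 2 * E / (E * E + 1) < sin (2 * PI / (3 * M)).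
Proof.
  intros HM HE. pose proof PI2_3_2. pose proof PI_4.
  set (x := 2 * PI / (3 * M)). set (y := 2 / M).
  assert (x * (3 * M) = 2 * PI) by (unfold x; field; lra).
  assert (y * M = 2) by (unfold y; field; lra).
  assert (y < x) by nra. assert (0 < y) by nra. assert (x <= 4 / 3) by nra. assert (y <= 1) by nra.
  pose proof (sin_ge_cubic x ltac:(lra) ltac:(lra)).
  assert (Ey : y = 2 / M) by reflexivity. clearbody x y.
  assert (y - y * y * y / 6 < x - x * x * x / 6).
  { assert (x * x + x * y + y * y < 6) by nra.
    assert (x - x * x * x / 6 - (y - y * y * y / 6) = (x - y) * (1 - (x * x + x * y + y * y) / 6)) by field.
    assert (0 < (x - y) * (1 - (x * x + x * y + y * y) / 6)) by (apply Rmult_lt_0_compat; lra). lra. }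
  assert (2 * M / (M * M + 1) < y - y * y * y / 6).
  { rewrite Ey. apply Rlt_0_minus.
    replace (2 / M - 2 / M * (2 / M) * (2 / M) / 6 - 2 * M / (M * M + 1))
      with ((2 * M * M - 4) / (3 * M * M * M * (M * M + 1))) by (field; nra).
    apply Rdiv_lt_0_compat; [nra |]. repeat apply Rmult_lt_0_compat; nra. }
  assert (2 * E / (E * E + 1) < 2 * M / (M * M + 1)); [| lra].
  apply Rlt_0_minus.
  replace (2 * M / (M * M + 1) - 2 * E / (E * E + 1))
    with (2 * (E - M) * (E * M - 1) / ((M * M + 1) * (E * E + 1))) by (field; nra).
  apply Rdiv_lt_0_compat; [repeat apply Rmult_lt_0_compat | apply Rmult_lt_0_compat]; nra.
Qed.

Definition circle_angle (N j : nat) : R := 2 * PI * INR j / INR N.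

Lemma cos_le_two_steps (D N : R) : 0 < N -> 2 <= D -> 2 * D <= N -> cos (2 * PI * D / N) <= cos (4 * PI / N).
Proof.
  intros HN HD HDN. pose proof PI_RGT_0.
  assert (Hle : 4 * PI / N <= 2 * PI * D / N)
    by (unfold Rdiv; apply Rmult_le_compat_r; [left; apply Rinv_0_lt_compat; lra | nra]).
  assert (2 * PI * D / N <= PI)
    by (apply (Rmult_le_reg_r N); auto; unfold Rdiv; rewrite Rmult_assoc, Rinv_l; nra).
  assert (0 <= 4 * PI / N) by (apply Rle_mult_inv_pos; lra).
  destruct Hle as [Hlt|Heq]; [left; apply cos_decreasing_1 | rewrite Heq]; lra.
Qed.

Lemma cos_angle_far (N j k : nat) : (j < N)%nat -> (k + 2 <= j)%nat -> (j + 2 <= k + N)%nat ->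
  cos (circle_angle N j) * cos (circle_angle N k) + sin (circle_angle N j) * sin (circle_angle N k)
  <= cos (4 * PI / INR N).
Proof.
  intros Hj Hkj Hjk. rewrite <- cos_minus. unfold circle_angle.
  assert (0 < INR N) by (apply lt_0_INR; lia).
  assert (Htwo : forall n, (2 <= n)%nat -> 2 <= INR n)
    by (intros n Hn; replace 2 with (INR 2) by (simpl; lra); apply le_INR; lia).
  assert (Hdouble : forall n, (2 * n <= N)%nat -> 2 * INR n <= INR N)
    by (intros n Hn; replace 2 with (INR 2) by (simpl; lra); rewrite <- mult_INR; apply le_INR; lia).
  replace (2 * PI * INR j / INR N - 2 * PI * INR k / INR N) with (2 * PI * INR (j - k) / INR N)
    by (rewrite minus_INR by lia; field; lra).
  destruct (Compare_dec.le_lt_dec (2 * (j - k)) N).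
  - apply cos_le_two_steps; [lra | apply Htwo; lia | apply Hdouble; lia].
  - replace (2 * PI * INR (j - k) / INR N) with (2 * PI - 2 * PI * INR (N - (j - k)) / INR N)
      by (rewrite minus_INR by lia; field; lra).
    rewrite cos_minus, cos_2PI, sin_2PI, Rmult_1_l, Rmult_0_l, Rplus_0_r.
    apply cos_le_two_steps; [lra | apply Htwo; lia | apply Hdouble; lia].
Qed.

(* The cap [{u | a1 u1 + a2 u2 >= a0 - 1}] has angular radius [alpha] with
   [cos (2 alpha) = (a0 - 3) / (a0 + 1)]. *)
Lemma cap_cos_ge (a0 a1 a2 c0 s0 c1 s1 : R) :
  1 < a0 -> a0 * a0 - a1 * a1 - a2 * a2 = 1 -> c0 * c0 + s0 * s0 = 1 -> c1 * c1 + s1 * s1 = 1 ->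
  a0 - 1 <= a1 * c0 + a2 * s0 -> a0 - 1 <= a1 * c1 + a2 * s1 ->
  (a0 - 3) / (a0 + 1) <= c0 * c1 + s0 * s1.
Proof.
  intros Ha0 Hn Hu0 Hu1 Hcap0 Hcap1.
  set (p := a1 * c0 + a2 * s0) in *. set (p' := a1 * c1 + a2 * s1) in *.
  set (q := a1 * s0 - a2 * c0). set (q' := a1 * s1 - a2 * c1).
  assert (I : (a1 * a1 + a2 * a2) * (c0 * c1 + s0 * s1) = p * p' + q * q') by (unfold p, p', q, q'; ring).
  assert (I0 : p * p + q * q = a1 * a1 + a2 * a2)
    by (unfold p, q; transitivity ((a1 * a1 + a2 * a2) * (c0 * c0 + s0 * s0)); [ring | rewrite Hu0; ring]).
  assert (I1 : p' * p' + q' * q' = a1 * a1 + a2 * a2)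
    by (unfold p', q'; transitivity ((a1 * a1 + a2 * a2) * (c1 * c1 + s1 * s1)); [ring | rewrite Hu1; ring]).
  assert (Ha : a1 * a1 + a2 * a2 = (a0 - 1) * (a0 + 1)) by lra.
  pose proof (Rle_0_sqr (q + q')). unfold Rsqr in *.
  assert (p + p' >= 2 * (a0 - 1)) by lra.
  assert ((p + p') * (p + p') >= 4 * (a0 - 1) * (a0 - 1)) by nra.
  assert ((a0 - 1) * (a0 + 1) * (c0 * c1 + s0 * s1) >= (a0 - 1) * (a0 - 3)) by (rewrite <- Ha, I; nra).
  apply (Rmult_le_reg_l ((a0 - 1) * (a0 + 1))); [nra |].
  replace ((a0 - 1) * (a0 + 1) * ((a0 - 3) / (a0 + 1))) with ((a0 - 1) * (a0 - 3)) by (field; lra). lra.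
Qed.

Lemma cap_cos_gt (E a0 sg : R) : 0 < E -> (E * E + / (E * E)) / 2 <= a0 -> 2 * E / (E * E + 1) < sg ->
  1 - 2 * sg * sg < (a0 - 3) / (a0 + 1).
Proof.
  intros HE Ha0 Hsg.
  assert (0 < 2 * E / (E * E + 1)) by (apply Rdiv_lt_0_compat; nra).
  set (w := 2 * E / (E * E + 1)) in *.
  assert (w * w < sg * sg) by nra.
  assert (Ew : w * w = 4 * (E * E) / ((E * E + 1) * (E * E + 1))) by (unfold w; field; nra).
  assert (Ha0' : (a0 + 1) * (2 * (E * E)) >= (E * E + 1) * (E * E + 1)).
  { replace ((E * E + 1) * (E * E + 1)) with (((E * E + / (E * E)) / 2 + 1) * (2 * (E * E))) by (field; nra).
    apply Rle_ge, Rmult_le_compat_r; nra. }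
  assert (0 < a0 + 1) by nra.
  replace ((a0 - 3) / (a0 + 1)) with (1 - 4 / (a0 + 1)) by (field; lra).
  assert (4 / (a0 + 1) <= 2 * (w * w)); [| lra].
  rewrite Ew. apply (Rmult_le_reg_r ((a0 + 1) * ((E * E + 1) * (E * E + 1)))); [nra |].
  replace (4 / (a0 + 1) * ((a0 + 1) * ((E * E + 1) * (E * E + 1)))) with (4 * ((E * E + 1) * (E * E + 1))) by (field; lra).
  replace (2 * (4 * (E * E) / ((E * E + 1) * (E * E + 1))) * ((a0 + 1) * ((E * E + 1) * (E * E + 1))))
    with (4 * ((a0 + 1) * (2 * (E * E)))) by (field; nra).
  lra.
Qed.

Lemma covered_length_le_twice (A : Type) (L : list A) (P : nat -> A -> Prop)
  (dec : forall j t, {P j t} + {~ P j t}) (J : list nat) :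
  NoDup J -> (forall j, In j J -> exists t, In t L /\ P j t) ->
  (forall t j1 j2 j3, In t L -> In j1 J -> In j2 J -> In j3 J ->
     j1 <> j2 -> j1 <> j3 -> j2 <> j3 -> P j1 t -> P j2 t -> P j3 t -> False) ->
  (length J <= 2 * length L)%nat.
Proof.
  revert J. induction L as [|t L IH]; intros J HJ Hcov Hthree.
  - destruct J as [|j J]; simpl; [lia |]. destruct (Hcov j (or_introl eq_refl)) as [t [[] _]].
  - set (f := fun j => if dec j t then true else false).
    pose proof (filter_length f J) as Hsplit.
    assert (Hhere : (length (filter f J) <= 2)%nat).
    { assert (Hnd : NoDup (filter f J)) by (apply NoDup_filter; auto).
      assert (Hin : forall j, In j (filter f J) -> In j J /\ P j t).
      { intros j Hj. apply filter_In in Hj as [Hj Hfj]. unfold f in Hfj.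
        destruct (dec j t); [auto | discriminate]. }
      destruct (filter f J) as [|a [|b [|c rest]]]; simpl; try lia. exfalso.
      apply NoDup_cons_iff in Hnd as [Ha Hnd]. apply NoDup_cons_iff in Hnd as [Hb _].
      destruct (Hin a ltac:(simpl; auto)), (Hin b ltac:(simpl; auto)), (Hin c ltac:(simpl; auto)).
      apply (Hthree t a b c (or_introl eq_refl)); auto; intros E; subst; simpl in *; tauto. }
    assert (Hrest : (length (filter (fun x => negb (f x)) J) <= 2 * length L)%nat).
    { apply IH; [apply NoDup_filter; auto | |].
      - intros j Hj. apply filter_In in Hj as [Hj Hfj]. unfold f in Hfj.
        destruct (dec j t); [discriminate |].
        destruct (Hcov j Hj) as [t' [[<-|Ht'] Hp]]; [contradiction | eauto].
      - intros t' j1 j2 j3 Ht' H1 H2 H3. apply filter_In in H1, H2, H3.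
        apply (Hthree t' j1 j2 j3); simpl; tauto. }
    simpl. lia.
Qed.

Lemma add_inv_sq_gt2 (E : R) : 1 < E -> 2 < E * E + / (E * E).
Proof.
  intros HE. assert (Hq : 1 < E * E) by nra.
  assert (Hinv : E * E * / (E * E) = 1) by (field; lra).
  set (q := E * E) in *. set (iq := / q) in *.
  assert (Hsq : (q + iq - 2) * q = (q - 1) * (q - 1)) by (transitivity (q * q + q * iq - 2 * q); [ring | rewrite Hinv; ring]).
  assert (0 < (q - 1) * (q - 1)) by nra. nra.
Qed.

Lemma cos_sin_unit (x : R) : cos x * cos x + sin x * sin x = 1.
Proof. pose proof (sin2_cos2 x). unfold Rsqr in *. lra. Qed.

Lemma cap_no_far_angles (N : nat) (E a0 a1 a2 : R) (j k : nat) :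
  1 < E -> a0 * a0 - a1 * a1 - a2 * a2 = 1 -> (E * E + / (E * E)) / 2 <= a0 ->
  2 * E / (E * E + 1) < sin (2 * PI / INR N) -> (j < N)%nat -> (k < N)%nat ->
  a0 - 1 <= a1 * cos (circle_angle N j) + a2 * sin (circle_angle N j) ->
  a0 - 1 <= a1 * cos (circle_angle N k) + a2 * sin (circle_angle N k) ->
  ~ ((k + 2 <= j)%nat /\ (j + 2 <= k + N)%nat).
Proof.
  intros HE Hn Ha0 Hsin Hj Hk Hcapj Hcapk [Hkj Hjk].
  pose proof (add_inv_sq_gt2 E HE).
  assert (0 < INR N) by (apply lt_0_INR; lia).
  assert (Hcos : cos (4 * PI / INR N) = 1 - 2 * sin (2 * PI / INR N) * sin (2 * PI / INR N))
    by (rewrite <- cos_2a_sin; f_equal; field; lra).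
  pose proof (cos_angle_far N j k Hj Hkj Hjk).
  pose proof (cap_cos_gt E a0 _ ltac:(lra) Ha0 Hsin).
  pose proof (cap_cos_ge a0 a1 a2 _ _ _ _ ltac:(lra) Hn (cos_sin_unit (circle_angle N j))
                (cos_sin_unit (circle_angle N k)) Hcapj Hcapk).
  lra.
Qed.

Lemma caps_cover_circle_length (A : Type) (L : list A) (a0 a1 a2 : A -> R) (E : R) : 1 < E ->
  (forall x, In x L -> a0 x * a0 x - a1 x * a1 x - a2 x * a2 x = 1 /\ (E * E + / (E * E)) / 2 <= a0 x) ->
  (forall c s, c * c + s * s = 1 -> exists x, In x L /\ a0 x - 1 <= a1 x * c + a2 x * s) ->
  E <= INR (length L).
Proof.
  intros HE Hcaps Hcover. pose proof (add_inv_sq_gt2 E HE).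
  destruct (Rle_lt_dec E (INR (length L))) as [|Hlt]; [assumption | exfalso].
  destruct L as [|x0 [|x1 L']].
  - destruct (Hcover 1 0 ltac:(lra)) as [x [[] _]].
  - destruct (Hcover 1 0 ltac:(lra)) as [x [[<-|[]] H1]].
    destruct (Hcover (-1) 0 ltac:(lra)) as [x [[<-|[]] H2]].
    destruct (Hcaps x0 (or_introl eq_refl)). lra.
  - set (L := x0 :: x1 :: L') in *. set (m := length L) in *.
    assert (Hm : (2 <= m)%nat) by (unfold m, L; simpl; lia).
    assert (HmR : 2 <= INR m) by (replace 2 with (INR 2) by (simpl; lra); apply le_INR; auto).
    set (N := (3 * m)%nat).
    assert (HN : INR N = 3 * INR m) by (unfold N; rewrite mult_INR; simpl; lra).
    assert (Hsin : 2 * E / (E * E + 1) < sin (2 * PI / INR N))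
      by (rewrite HN; apply inv_cosh_lt_sin; auto).
    assert (Hcount : (length (seq 0 N) <= 2 * m)%nat).
    { apply (covered_length_le_twice A L (fun j x =>
               a0 x - 1 <= a1 x * cos (circle_angle N j) + a2 x * sin (circle_angle N j))).
      - intros j x. apply Rle_dec.
      - apply seq_NoDup.
      - intros j _. apply Hcover, cos_sin_unit.
      - intros x j1 j2 j3 Hx I1 I2 I3 n12 n13 n23 P1 P2 P3.
        apply in_seq in I1, I2, I3. destruct (Hcaps x Hx) as [Hn Ha0].
        (* a cap holds only cyclically adjacent angles, and no three of them when [N >= 4] *)
        pose proof (cap_no_far_angles N E _ _ _ j1 j2 HE Hn Ha0 Hsin ltac:(lia) ltac:(lia) P1 P2).
        pose proof (cap_no_far_angles N E _ _ _ j2 j1 HE Hn Ha0 Hsin ltac:(lia) ltac:(lia) P2 P1).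
        pose proof (cap_no_far_angles N E _ _ _ j1 j3 HE Hn Ha0 Hsin ltac:(lia) ltac:(lia) P1 P3).
        pose proof (cap_no_far_angles N E _ _ _ j3 j1 HE Hn Ha0 Hsin ltac:(lia) ltac:(lia) P3 P1).
        pose proof (cap_no_far_angles N E _ _ _ j2 j3 HE Hn Ha0 Hsin ltac:(lia) ltac:(lia) P2 P3).
        pose proof (cap_no_far_angles N E _ _ _ j3 j2 HE Hn Ha0 Hsin ltac:(lia) ltac:(lia) P3 P2).
        unfold N in *. lia. }
    rewrite length_seq in Hcount. unfold N in Hcount. lia.
Qed.

(** * Hyperboloid and Klein coordinates *)

Definition cosh_dist (p q : pt) : R :=
  1 + ((fst p - fst q) ^ 2 + (snd p - snd q) ^ 2) / (2 * snd p * snd q).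

Lemma hdist_arcosh (p q : pt) : hdist p q = arcosh (cosh_dist p q).
Proof. reflexivity. Qed.

Lemma cosh_dist_sym (p q : pt) : cosh_dist p q = cosh_dist q p.
Proof. unfold cosh_dist, Rdiv. f_equal. f_equal; [ring | f_equal; ring]. Qed.

Lemma cosh_dist_ge1 (p q : pt) : inH p -> inH q -> 1 <= cosh_dist p q.
Proof.
  unfold inH, cosh_dist. intros Hp Hq.
  assert (0 <= ((fst p - fst q) ^ 2 + (snd p - snd q) ^ 2) / (2 * snd p * snd q)); [|lra].
  apply Rmult_le_pos; [apply Rplus_le_le_0_compat; apply pow2_ge_0|].
  left; apply Rinv_0_lt_compat; nra.
Qed.

Lemma cosh_dist_gt1 (p q : pt) : inH p -> inH q -> p <> q -> 1 < cosh_dist p q.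
Proof.
  unfold inH, cosh_dist. destruct p as [x y], q as [u v]; simpl. intros Hy Hv Hne.
  assert (0 < (x - u) ^ 2 + (y - v) ^ 2).
  { destruct (Req_dec x u), (Req_dec y v); subst; try (exfalso; auto; fail); nra. }
  assert (0 < ((x - u) ^ 2 + (y - v) ^ 2) / (2 * y * v)); [|lra].
  apply Rmult_lt_0_compat; auto. apply Rinv_0_lt_compat; nra.
Qed.

Lemma cosh_dist_refl (p : pt) : cosh_dist p p = 1.
Proof. unfold cosh_dist, Rdiv. ring. Qed.

Lemma hdist_lt_iff (p q p' q' : pt) : inH p -> inH q -> inH p' -> inH q' ->
  hdist p q < hdist p' q' <-> cosh_dist p q < cosh_dist p' q'.
Proof. intros. rewrite !hdist_arcosh. apply arcosh_lt_iff; apply cosh_dist_ge1; auto. Qed.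

(* Coordinates of [z] on the hyperboloid model, in the Lorentz frame that puts [s] at
   (1, 0, 0); [cosh_dist] becomes the Lorentz form (see [cosh_dist_lorentz]). *)
Definition hyp0 (s z : pt) : R := cosh_dist z s.
Definition hyp1 (s z : pt) : R := (fst z - fst s) / snd z.
Definition hyp2 (s z : pt) : R :=
  ((fst z - fst s) ^ 2 + snd z ^ 2 - snd s ^ 2) / (2 * snd s * snd z).

Lemma cosh_dist_lorentz (s z w : pt) : inH s -> inH z -> inH w ->
  cosh_dist z w = hyp0 s z * hyp0 s w - hyp1 s z * hyp1 s w - hyp2 s z * hyp2 s w.
Proof.
  unfold inH. destruct s as [a b], z as [x y], w as [u v]; simpl; intros.
  unfold hyp0, hyp1, hyp2, cosh_dist; simpl. field. lra.
Qed.

Lemma hyp_norm (s z : pt) : inH s -> inH z ->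
  hyp0 s z * hyp0 s z - hyp1 s z * hyp1 s z - hyp2 s z * hyp2 s z = 1.
Proof. intros. rewrite <- (cosh_dist_lorentz s z z); auto. apply cosh_dist_refl. Qed.

Lemma hyp0_ge1 (s z : pt) : inH s -> inH z -> 1 <= hyp0 s z.
Proof. intros; apply cosh_dist_ge1; auto. Qed.

Lemma hyp0_gt1 (s z : pt) : inH s -> inH z -> z <> s -> 1 < hyp0 s z.
Proof. intros; apply cosh_dist_gt1; auto. Qed.

Lemma hyp_base (s : pt) : inH s -> hyp0 s s = 1 /\ hyp1 s s = 0 /\ hyp2 s s = 0.
Proof.
  unfold inH, hyp0, hyp1, hyp2. intros. rewrite cosh_dist_refl.
  split; [|split]; [reflexivity | field; lra | field; lra].
Qed.

Lemma hyp_inj (s z w : pt) : inH s -> inH z -> inH w ->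
  hyp0 s z = hyp0 s w -> hyp1 s z = hyp1 s w -> hyp2 s z = hyp2 s w -> z = w.
Proof.
  unfold inH, hyp0, hyp1, hyp2, cosh_dist.
  destruct s as [a b], z as [x y], w as [u v]; cbn [fst snd]. intros Hb Hy Hv E0 E1 E2.
  (* [hyp0 - hyp2 = b / y] *)
  assert (Hby : b / y = b / v).
  { replace (b / y) with (1 + ((x - a) ^ 2 + (y - b) ^ 2) / (2 * y * b)
                          - ((x - a) ^ 2 + y ^ 2 - b ^ 2) / (2 * b * y)) by (field; lra).
    rewrite E0, E2. field; lra. }
  assert (y = v) as <-.
  { apply (Rmult_eq_reg_l (b / (y * v))); [| apply Rgt_not_eq, Rdiv_lt_0_compat; nra].
    replace (b / (y * v) * y) with (b / v) by (field; lra).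
    replace (b / (y * v) * v) with (b / y) by (field; lra). auto. }
  assert (x = u) as <-; auto.
  apply (Rmult_eq_reg_r (/ y)); [| apply Rgt_not_eq, Rinv_0_lt_compat; lra].
  replace (x * / y) with ((x - a) / y + a / y) by (field; lra). rewrite E1. field; lra.
Qed.

(* [klein s k1 k2] is the point with Klein-disk coordinates (k1, k2) in the frame of [s]. *)
Definition klein_scale (k1 k2 : R) : R := sqrt (1 - k1 * k1 - k2 * k2).
Definition klein (s : pt) (k1 k2 : R) : pt :=
  (fst s + snd s * k1 / (1 - k2), snd s * klein_scale k1 k2 / (1 - k2)).

Lemma klein_scale_pos (k1 k2 : R) : k1 * k1 + k2 * k2 < 1 -> 0 < klein_scale k1 k2.
Proof. intros; unfold klein_scale; apply sqrt_lt_R0; lra. Qed.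

Lemma klein_scale_sq (k1 k2 : R) : k1 * k1 + k2 * k2 < 1 ->
  klein_scale k1 k2 * klein_scale k1 k2 = 1 - k1 * k1 - k2 * k2.
Proof. intros; unfold klein_scale; apply sqrt_sqrt; lra. Qed.

Lemma klein_inH (s : pt) (k1 k2 : R) : inH s -> k1 * k1 + k2 * k2 < 1 -> inH (klein s k1 k2).
Proof.
  unfold inH, klein; simpl. intros Hs Hk. pose proof (klein_scale_pos k1 k2 Hk).
  apply Rdiv_lt_0_compat; nra.
Qed.

Lemma hyp_klein (s : pt) (k1 k2 : R) : inH s -> k1 * k1 + k2 * k2 < 1 ->
  hyp0 s (klein s k1 k2) = / klein_scale k1 k2 /\
  hyp1 s (klein s k1 k2) = k1 / klein_scale k1 k2 /\
  hyp2 s (klein s k1 k2) = k2 / klein_scale k1 k2.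
Proof.
  intros Hs Hk. pose proof (klein_scale_pos k1 k2 Hk) as Hl.
  pose proof (klein_scale_sq k1 k2 Hk) as Hl2.
  assert (k2 < 1) by nra. unfold inH in Hs.
  assert (e1 : hyp1 s (klein s k1 k2) = k1 / klein_scale k1 k2).
  { unfold hyp1, klein; cbn [fst snd]. field. split; nra. }
  assert (e2 : hyp2 s (klein s k1 k2) = k2 / klein_scale k1 k2).
  { unfold hyp2, klein; cbn [fst snd]. destruct s as [a b]; cbn [fst snd] in *.
    set (l := klein_scale k1 k2) in *.
    replace ((a + b * k1 / (1 - k2) - a) ^ 2 + (b * l / (1 - k2)) ^ 2 - b ^ 2)
      with (b ^ 2 * (k1 * k1 + l * l - (1 - k2) ^ 2) / (1 - k2) ^ 2) by (field; lra).
    rewrite Hl2. field. split; lra. }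
  split; [| split; auto].
  (* the first coordinate is the positive root of the hyperboloid equation *)
  pose proof (hyp_norm s (klein s k1 k2) Hs (klein_inH s k1 k2 Hs Hk)) as N. rewrite e1, e2 in N.
  pose proof (hyp0_ge1 s (klein s k1 k2) Hs (klein_inH s k1 k2 Hs Hk)) as G.
  set (l := klein_scale k1 k2) in *. set (h := hyp0 s (klein s k1 k2)) in *.
  assert (Hhl : (h * l) * (h * l) = 1).
  { assert (Hh : h * h = 1 + (k1 / l) * (k1 / l) + (k2 / l) * (k2 / l)) by lra.
    replace ((h * l) * (h * l)) with (h * h * (l * l)) by ring. rewrite Hh.
    replace ((1 + k1 / l * (k1 / l) + k2 / l * (k2 / l)) * (l * l))
      with (l * l + k1 * k1 + k2 * k2) by (field; lra).
    rewrite Hl2; ring. }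
  assert (0 < h * l) by nra.
  assert (h * l = 1) by nra.
  apply (Rmult_eq_reg_r l); [| lra]. rewrite Rinv_l; lra.
Qed.

Lemma klein_inj (s : pt) (k1 k2 m1 m2 : R) : inH s ->
  k1 * k1 + k2 * k2 < 1 -> m1 * m1 + m2 * m2 < 1 -> klein s k1 k2 = klein s m1 m2 ->
  k1 = m1 /\ k2 = m2.
Proof.
  intros Hs Hk Hm E.
  destruct (hyp_klein s k1 k2 Hs Hk) as [a0 [a1 a2]], (hyp_klein s m1 m2 Hs Hm) as [b0 [b1 b2]].
  pose proof (klein_scale_pos _ _ Hk). pose proof (klein_scale_pos _ _ Hm).
  rewrite E in a0, a1, a2. rewrite a0 in b0. rewrite a1 in b1. rewrite a2 in b2.
  assert (Hl : klein_scale k1 k2 = klein_scale m1 m2).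
  { rewrite <- (Rinv_inv (klein_scale k1 k2)), <- (Rinv_inv (klein_scale m1 m2)), b0. auto. }
  rewrite Hl in b1, b2. unfold Rdiv in b1, b2.
  apply Rmult_eq_reg_r in b1; [| apply Rinv_neq_0_compat; lra].
  apply Rmult_eq_reg_r in b2; [| apply Rinv_neq_0_compat; lra]. auto.
Qed.

(** * Geodesic segments *)

Lemma lorentz_null_orthogonal_eq0 (v0 v1 v2 a0 a1 a2 : R) :
  0 < a0 -> a0 * a0 - a1 * a1 - a2 * a2 = 1 ->
  v0 * v0 - v1 * v1 - v2 * v2 = 0 -> v0 * a0 - v1 * a1 - v2 * a2 = 0 ->
  v0 = 0 /\ v1 = 0 /\ v2 = 0.
Proof.
  intros Ha0 Ha Hv Horth.
  assert (Lagrange : (v1 * a1 + v2 * a2) * (v1 * a1 + v2 * a2) + (v1 * a2 - v2 * a1) * (v1 * a2 - v2 * a1)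
                     = (v1 * v1 + v2 * v2) * (a1 * a1 + a2 * a2)) by ring.
  assert (Hva : v0 * a0 = v1 * a1 + v2 * a2) by lra.
  assert (v0 * v0 * (a0 * a0) = (v1 * a1 + v2 * a2) * (v1 * a1 + v2 * a2)) by (rewrite <- Hva; ring).
  assert ((v1 * v1 + v2 * v2) * (a1 * a1 + a2 * a2) = v0 * v0 * (a0 * a0 - 1))
    by (replace (v1 * v1 + v2 * v2) with (v0 * v0) by lra; replace (a1 * a1 + a2 * a2) with (a0 * a0 - 1) by lra; ring).
  pose proof (Rle_0_sqr (v1 * a2 - v2 * a1)). unfold Rsqr in *.
  assert (v0 = 0) by nra. subst. nra.
Qed.

(* Equality in the triangle inequality forces [z] into the cone spanned by [a] and [b]:
   the coefficients are solved from the Lorentz products with [a] and [b], and the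
   remainder is a null vector orthogonal to [a]. *)
Lemma lorentz_segment_combination (a0 a1 a2 b0 b1 b2 z0 z1 z2 : R) :
  0 < a0 -> a0 * a0 - a1 * a1 - a2 * a2 = 1 -> b0 * b0 - b1 * b1 - b2 * b2 = 1 ->
  z0 * z0 - z1 * z1 - z2 * z2 = 1 ->
  let x := a0 * z0 - a1 * z1 - a2 * z2 in
  let y := z0 * b0 - z1 * b1 - z2 * b2 in
  let c := a0 * b0 - a1 * b1 - a2 * b2 in
  1 <= x -> 1 <= y -> 1 < c -> c = x * y + sqrt (x * x - 1) * sqrt (y * y - 1) ->
  exists al be, 0 <= al /\ 0 <= be /\
    z0 = al * a0 + be * b0 /\ z1 = al * a1 + be * b1 /\ z2 = al * a2 + be * b2.
Proof.
  intros Ha0 NA NB NZ x y c Hx Hy Hc E.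
  pose proof (sqrt_pos (x * x - 1)). pose proof (sqrt_pos (y * y - 1)).
  pose proof (sqrt_sq_sub1 x Hx). pose proof (sqrt_sq_sub1 y Hy).
  set (sx := sqrt (x * x - 1)) in *. set (sy := sqrt (y * y - 1)) in *.
  assert (D : 0 < c * c - 1) by nra.
  set (al := (c * y - x) / (c * c - 1)). set (be := (c * x - y) / (c * c - 1)).
  assert (Hal : 0 <= al) by (unfold al; apply Rle_mult_inv_pos; [rewrite E; nra | lra]).
  assert (Hbe : 0 <= be) by (unfold be; apply Rle_mult_inv_pos; [rewrite E; nra | lra]).
  assert (K : (c - x * y) * (c - x * y) = (x * x - 1) * (y * y - 1)) by (rewrite E; nra).
  set (v0 := z0 - al * a0 - be * b0). set (v1 := z1 - al * a1 - be * b1).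
  set (v2 := z2 - al * a2 - be * b2).
  assert (O1 : v0 * a0 - v1 * a1 - v2 * a2 = 0).
  { transitivity (x - al - be * c); [unfold v0, v1, v2, x, c; nra |].
    unfold al, be. field; lra. }
  assert (O2 : v0 * b0 - v1 * b1 - v2 * b2 = 0).
  { transitivity (y - al * c - be); [unfold v0, v1, v2, y, c; nra |].
    unfold al, be. field; lra. }
  assert (O3 : v0 * v0 - v1 * v1 - v2 * v2 = 0).
  { transitivity (v0 * z0 - v1 * z1 - v2 * z2 - al * (v0 * a0 - v1 * a1 - v2 * a2)
                  - be * (v0 * b0 - v1 * b1 - v2 * b2)); [unfold v0, v1, v2; ring |].
    rewrite O1, O2.
    transitivity (1 - (al * x + be * y)); [unfold v0, v1, v2, x, y; nra |].
    assert (Hxy : al * x + be * y = (2 * c * x * y - x * x - y * y) / (c * c - 1))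
      by (unfold al, be; field; lra).
    rewrite Hxy. replace (2 * c * x * y - x * x - y * y) with (c * c - 1) by nra. field; lra. }
  destruct (lorentz_null_orthogonal_eq0 v0 v1 v2 a0 a1 a2 Ha0 NA O3 O1) as [? [? ?]].
  exists al, be. unfold v0, v1, v2 in *. repeat split; auto; lra.
Qed.

Lemma hsegment_combination (s a b z : pt) : inH s -> inH a -> inH b -> a <> b ->
  hsegment a b z ->
  exists al be, 0 <= al /\ 0 <= be /\ 0 < al + be /\
    hyp0 s z = al * hyp0 s a + be * hyp0 s b /\
    hyp1 s z = al * hyp1 s a + be * hyp1 s b /\
    hyp2 s z = al * hyp2 s a + be * hyp2 s b.
Proof.
  intros Hs Ha Hb Hab [Hz Heq]. rewrite !hdist_arcosh in Heq.
  pose proof (cosh_dist_ge1 a z Ha Hz) as Haz. pose proof (cosh_dist_ge1 z b Hz Hb) as Hzb.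
  pose proof (cosh_dist_gt1 a b Ha Hb Hab) as Hab'.
  pose proof (arcosh_add _ _ _ Haz Hzb (Rlt_le _ _ Hab') Heq) as E.
  rewrite (cosh_dist_lorentz s a z), (cosh_dist_lorentz s z b), (cosh_dist_lorentz s a b) in *; auto.
  destruct (lorentz_segment_combination (hyp0 s a) (hyp1 s a) (hyp2 s a) (hyp0 s b) (hyp1 s b)
              (hyp2 s b) (hyp0 s z) (hyp1 s z) (hyp2 s z)) as [al [be [Hal [Hbe [Z0 [Z1 Z2]]]]]];
    auto using hyp_norm.
  { pose proof (hyp0_ge1 s a Hs Ha); lra. }
  exists al, be. repeat split; auto.
  pose proof (hyp0_ge1 s z Hs Hz). pose proof (hyp0_ge1 s a Hs Ha). pose proof (hyp0_ge1 s b Hs Hb).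
  destruct (Rle_lt_dec (al + be) 0); auto.
  assert (al = 0) by lra. assert (be = 0) by lra. subst. lra.
Qed.

(** * Bisectors and closures of Voronoi cells *)

(* [bisector s t z] has the sign of [hdist z t - hdist z s]; in Klein coordinates of the
   frame of [s] the Voronoi cell of [s] is the intersection of the half-planes
   [klein_gap s t k1 k2 > 0]. *)
Definition bisector (s t z : pt) : R :=
  (hyp0 s t - 1) * hyp0 s z - hyp1 s t * hyp1 s z - hyp2 s t * hyp2 s z.

Definition klein_gap (s t : pt) (k1 k2 : R) : R :=
  (hyp0 s t - 1) - (hyp1 s t * k1 + hyp2 s t * k2).

Definition klein1 (s z : pt) : R := hyp1 s z / hyp0 s z.
Definition klein2 (s z : pt) : R := hyp2 s z / hyp0 s z.

Lemma closer_iff_bisector_pos (s t y : pt) : inH s -> inH t -> inH y ->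
  hdist y s < hdist y t <-> 0 < bisector s t y.
Proof.
  intros. rewrite hdist_lt_iff by auto.
  rewrite (cosh_dist_lorentz s y t) by auto.
  change (cosh_dist y s) with (hyp0 s y). unfold bisector. split; intros; lra.
Qed.

Lemma bisector_klein (s t : pt) (k1 k2 : R) : inH s -> k1 * k1 + k2 * k2 < 1 ->
  bisector s t (klein s k1 k2) = klein_gap s t k1 k2 / klein_scale k1 k2.
Proof.
  intros Hs Hk. destruct (hyp_klein s k1 k2 Hs Hk) as [e0 [e1 e2]].
  pose proof (klein_scale_pos _ _ Hk). unfold bisector, klein_gap. rewrite e0, e1, e2. field. lra.
Qed.

Lemma cosh_dist_klein (s t : pt) (k1 k2 : R) : inH s -> inH t -> k1 * k1 + k2 * k2 < 1 ->
  cosh_dist (klein s k1 k2) t = (1 + klein_gap s t k1 k2) / klein_scale k1 k2.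
Proof.
  intros Hs Ht Hk. pose proof (klein_inH s k1 k2 Hs Hk).
  destruct (hyp_klein s k1 k2 Hs Hk) as [e0 [e1 e2]]. pose proof (klein_scale_pos _ _ Hk).
  rewrite (cosh_dist_lorentz s) by auto. unfold klein_gap. rewrite e0, e1, e2. field. lra.
Qed.

Lemma klein_gap_scale (s t : pt) (la k1 k2 : R) :
  klein_gap s t (la * k1) (la * k2) = (1 - la) * (hyp0 s t - 1) + la * klein_gap s t k1 k2.
Proof. unfold klein_gap. ring. Qed.

Lemma klein_gap_base (s : pt) (k1 k2 : R) : inH s -> klein_gap s s k1 k2 = 0.
Proof. intros Hs. destruct (hyp_base s Hs) as [e0 [e1 e2]]. unfold klein_gap. rewrite e0, e1, e2. ring. Qed.

Lemma klein_coords_norm (s z : pt) : inH s -> inH z ->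
  (klein1 s z * klein1 s z + klein2 s z * klein2 s z) * (hyp0 s z * hyp0 s z) = hyp0 s z * hyp0 s z - 1.
Proof.
  intros Hs Hz. pose proof (hyp_norm s z Hs Hz). pose proof (hyp0_ge1 s z Hs Hz).
  unfold klein1, klein2.
  replace ((hyp1 s z / hyp0 s z * (hyp1 s z / hyp0 s z) + hyp2 s z / hyp0 s z * (hyp2 s z / hyp0 s z))
           * (hyp0 s z * hyp0 s z)) with (hyp1 s z * hyp1 s z + hyp2 s z * hyp2 s z) by (field; lra).
  lra.
Qed.

Lemma klein_ray_cosh_dist (s z : pt) (la : R) : inH s -> inH z ->
  let k1 := la * klein1 s z in let k2 := la * klein2 s z in
  k1 * k1 + k2 * k2 < 1 ->
  (cosh_dist z (klein s k1 k2) ^ 2 - 1) * (klein_scale k1 k2 * klein_scale k1 k2)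
  = (hyp0 s z * hyp0 s z - 1) * (1 - la) ^ 2.
Proof.
  intros Hs Hz k1 k2 Hk. pose proof (klein_coords_norm s z Hs Hz) as Hn.
  pose proof (hyp0_ge1 s z Hs Hz). pose proof (klein_scale_pos _ _ Hk).
  destruct (hyp_klein s k1 k2 Hs Hk) as [e0 [e1 e2]].
  rewrite (cosh_dist_lorentz s) by auto using klein_inH. rewrite e0, e1, e2. unfold k1, k2 in *.
  replace (hyp1 s z) with (klein1 s z * hyp0 s z) by (unfold klein1; field; lra).
  replace (hyp2 s z) with (klein2 s z * hyp0 s z) by (unfold klein2; field; lra).
  pose proof (klein_scale_sq _ _ Hk) as Hl2.
  set (l := klein_scale (la * klein1 s z) (la * klein2 s z)) in *.
  set (Z := hyp0 s z) in *. set (q1 := klein1 s z) in *. set (q2 := klein2 s z) in *.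
  set (rho := q1 * q1 + q2 * q2) in *.
  assert (HCl : (Z * / l - q1 * Z * (la * q1 / l) - q2 * Z * (la * q2 / l)) * l = Z * (1 - la * rho))
    by (unfold rho; field; lra).
  set (C := Z * / l - q1 * Z * (la * q1 / l) - q2 * Z * (la * q2 / l)) in *.
  transitivity ((C * l) ^ 2 - l * l); [ring |]. rewrite HCl, Hl2.
  assert (Hrho : Z * Z - 1 - rho * (Z * Z) = 0) by lra.
  transitivity ((Z * Z - 1 - rho * (Z * Z)) * (2 * la - la * la * (1 + rho)) + (Z * Z - 1) * (1 - la) ^ 2);
    [unfold rho; ring | rewrite Hrho; ring].
Qed.

Lemma klein_ray_near (s z : pt) (d : R) : inH s -> inH z -> 0 < d ->
  exists eta, 0 < eta /\ forall la, 1 - eta < la < 1 + eta ->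
    let k1 := la * klein1 s z in let k2 := la * klein2 s z in
    k1 * k1 + k2 * k2 < 1 /\ cosh_dist z (klein s k1 k2) < 1 + d.
Proof.
  intros Hs Hz Hd. pose proof (hyp0_ge1 s z Hs Hz) as HZ. pose proof (klein_coords_norm s z Hs Hz) as Hn.
  set (Z := hyp0 s z) in *. set (m := Rmin 1 d).
  assert (Hm : 0 < m /\ m <= 1 /\ m <= d) by (unfold m; repeat split; [apply Rmin_pos | apply Rmin_l | apply Rmin_r]; lra).
  (* for [|la - 1| < m / (4 Z^2)], [klein_scale^2 >= 1 / (4 Z^2)], hence [cosh_dist^2 - 1 <= m^2 / 4] *)
  exists (m / (4 * (Z * Z))). split; [apply Rdiv_lt_0_compat; nra |].
  intros la Hla k1 k2.
  set (eta := m / (4 * (Z * Z))) in *.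
  assert (Heta : eta * (4 * (Z * Z)) = m) by (unfold eta; field; lra).
  assert (Hla2 : la * la <= 1 + 3 * eta) by nra.
  set (rho := klein1 s z * klein1 s z + klein2 s z * klein2 s z) in *.
  assert (Hk : k1 * k1 + k2 * k2 = la * la * rho) by (unfold k1, k2, rho; ring).
  assert (Hfar : 1 <= (1 - (k1 * k1 + k2 * k2)) * (4 * (Z * Z))).
  { rewrite Hk. replace ((1 - la * la * rho) * (4 * (Z * Z))) with (4 * (Z * Z) - 4 * (la * la) * (rho * (Z * Z))) by ring.
    rewrite Hn. assert (la * la * (Z * Z - 1) <= (1 + 3 * eta) * (Z * Z - 1)) by (apply Rmult_le_compat_r; nra).
    assert (0 < eta) by (unfold eta; apply Rdiv_lt_0_compat; nra).
    lra. }
  assert (Hdisk : k1 * k1 + k2 * k2 < 1) by nra.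
  split; auto.
  pose proof (klein_ray_cosh_dist s z la Hs Hz Hdisk) as E. fold k1 k2 Z in E.
  rewrite klein_scale_sq in E by auto.
  pose proof (cosh_dist_ge1 z (klein s k1 k2) Hz (klein_inH s k1 k2 Hs Hdisk)).
  set (C := cosh_dist z (klein s k1 k2)) in *.
  assert (Hsq : C ^ 2 - 1 <= (Z * Z - 1) * (1 - la) ^ 2 * (4 * (Z * Z))).
  { assert (0 <= C ^ 2 - 1) by nra. rewrite <- E.
    replace ((C ^ 2 - 1) * (1 - k1 * k1 - k2 * k2) * (4 * (Z * Z)))
      with ((C ^ 2 - 1) * ((1 - (k1 * k1 + k2 * k2)) * (4 * (Z * Z)))) by ring.
    rewrite <- (Rmult_1_r (C ^ 2 - 1)) at 1. apply Rmult_le_compat_l; lra. }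
  assert (Hsmall : (Z * Z - 1) * (1 - la) ^ 2 <= Z * Z * (eta * eta)).
  { assert (0 < (eta - (1 - la)) * (eta + (1 - la))) by (apply Rmult_lt_0_compat; lra).
    apply Rle_trans with (Z * Z * (1 - la) ^ 2).
    - apply Rmult_le_compat_r; [apply pow2_ge_0 | lra].
    - apply Rmult_le_compat_l; nra. }
  assert (Hm2 : Z * Z * (eta * eta) * (4 * (Z * Z)) = m * m / 4) by (rewrite <- Heta; field; lra).
  assert (Hsq' : C ^ 2 - 1 <= m * m / 4).
  { rewrite <- Hm2. apply Rle_trans with (1 := Hsq). apply Rmult_le_compat_r; nra. }
  assert (C <= C ^ 2) by (simpl; nra).
  assert (m * m <= m) by nra.
  lra.
Qed.

Lemma hclosure_klein_ray (A : pt -> Prop) (s z : pt) : inH s -> inH z ->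
  (forall eta, 0 < eta -> exists la, 1 - eta < la < 1 + eta /\
     let k1 := la * klein1 s z in let k2 := la * klein2 s z in
     k1 * k1 + k2 * k2 < 1 -> A (klein s k1 k2)) ->
  hclosure A z.
Proof.
  intros Hs Hz HA. split; auto. intros eps Heps.
  destruct (arcosh_lt_near_one eps Heps) as [d [Hd Harcosh]].
  destruct (klein_ray_near s z d Hs Hz Hd) as [eta [Heta Hnear]].
  destruct (HA eta Heta) as [la [Hla HAla]]. destruct (Hnear la Hla) as [Hk Hc].
  exists (klein s (la * klein1 s z) (la * klein2 s z)). split; [now apply HAla |].
  rewrite hdist_arcosh. apply Harcosh; auto.
  apply cosh_dist_ge1; auto using klein_inH.
Qed.

Lemma pt_eq_dec (p q : pt) : {p = q} + {p <> q}.
Proof.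
  destruct p as [a b], q as [c d].
  destruct (Req_EM_T a c), (Req_EM_T b d); subst; auto; right; intros H; inversion H; auto.
Qed.

Lemma klein_gap_of_bisector (s t z : pt) : inH s -> inH z ->
  klein_gap s t (klein1 s z) (klein2 s z) = bisector s t z / hyp0 s z.
Proof.
  intros Hs Hz. pose proof (hyp0_ge1 s z Hs Hz).
  unfold bisector, klein_gap, klein1, klein2. field. lra.
Qed.

Lemma hclosure_cell_of_bisector_nonneg (S : list pt) (s z : pt) :
  inH s -> (forall t, In t S -> inH t) -> inH z ->
  (forall t, In t S -> t <> s -> 0 <= bisector s t z) -> hclosure (voronoi S s) z.
Proof.
  intros Hs HS Hz Hbis. apply hclosure_klein_ray with s; auto. intros eta Heta.
  pose proof (Rmin_pos eta 1 Heta ltac:(lra)). pose proof (Rmin_l eta 1). pose proof (Rmin_r eta 1).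
  exists (1 - Rmin eta 1 / 2). split; [lra |]. intros k1 k2 Hk.
  split; [now apply klein_inH |]. intros t Ht Hts.
  apply closer_iff_bisector_pos; auto using klein_inH.
  rewrite bisector_klein by auto. apply Rdiv_lt_0_compat; [| now apply klein_scale_pos].
  unfold k1, k2. rewrite klein_gap_scale.
  pose proof (hyp0_gt1 s t Hs (HS t Ht) Hts). pose proof (hyp0_ge1 s z Hs Hz).
  assert (0 <= klein_gap s t (klein1 s z) (klein2 s z)).
  { rewrite klein_gap_of_bisector by auto. apply Rle_mult_inv_pos; auto; lra. }
  nra.
Qed.

Lemma hclosure_cell_of_bisector_zero (S : list pt) (s ts z : pt) :
  inH s -> (forall t, In t S -> inH t) -> In ts S -> ts <> s -> inH z ->
  bisector s ts z = 0 -> (forall t, In t S -> t <> s -> t <> ts -> 0 < bisector s t z) ->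
  hclosure (voronoi S ts) z.
Proof.
  intros Hs HS Hts Htss Hz Hbis0 Hbis. pose proof (hyp0_ge1 s z Hs Hz) as HZ.
  set (k1 := klein1 s z). set (k2 := klein2 s z).
  assert (Hg0 : klein_gap s ts k1 k2 = 0) by (unfold k1, k2; rewrite klein_gap_of_bisector, Hbis0 by auto; field; lra).
  (* beyond [z] the ray leaves the cell of [s] through the bisector of [ts] first *)
  destruct (eventually_forall_in pt S (fun t h => t <> s -> t <> ts ->
              0 < klein_gap s t ((1 + h) * k1) ((1 + h) * k2))) as [e [He Hnear]].
  { intros t Ht. destruct (pt_eq_dec t s) as [->|Hts']; [exists 1; split; [lra | congruence] |].
    destruct (pt_eq_dec t ts) as [->|Htts]; [exists 1; split; [lra | congruence] |].
    assert (Hg : 0 < klein_gap s t k1 k2).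
    { unfold k1, k2. rewrite klein_gap_of_bisector by auto. apply Rdiv_lt_0_compat; auto; lra. }
    destruct (affine_pos_near _ (hyp0 s t - 1 - klein_gap s t k1 k2) Hg) as [e [He Hpos]].
    exists e. split; auto. intros h Hh _ _. rewrite klein_gap_scale. specialize (Hpos h Hh). lra. }
  apply hclosure_klein_ray with s; auto. intros eta Heta.
  set (h := Rmin eta e / 2).
  pose proof (Rmin_pos eta e Heta He). pose proof (Rmin_l eta e). pose proof (Rmin_r eta e).
  assert (Hh : 0 < h < e /\ h < eta) by (unfold h; lra).
  exists (1 + h). split; [lra |]. fold k1 k2. intros m1 m2 Hk.
  split; [now apply klein_inH |]. intros t Ht Htts.
  pose proof (klein_inH s _ _ Hs Hk).
  apply hdist_lt_iff; auto. rewrite !cosh_dist_klein by auto.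
  apply Rmult_lt_compat_r; [apply Rinv_0_lt_compat, klein_scale_pos; auto |].
  assert (Hgts : klein_gap s ts m1 m2 < 0).
  { unfold m1, m2. rewrite klein_gap_scale, Hg0. pose proof (hyp0_gt1 s ts Hs (HS ts Hts) Htss). nra. }
  destruct (pt_eq_dec t s) as [->|Hts'].
  - rewrite klein_gap_base by auto. lra.
  - pose proof (Hnear t Ht h (proj1 Hh) Hts' Htts). unfold m1, m2 in *. lra.
Qed.

Lemma delaunay_adj_of_klein_chord (S : list pt) (s ts : pt) (k1 k2 m1 m2 : R) :
  inH s -> (forall t, In t S -> inH t) -> In ts S -> ts <> s ->
  k1 * k1 + k2 * k2 < 1 -> m1 * m1 + m2 * m2 < 1 -> ~ (k1 = m1 /\ k2 = m2) ->
  klein_gap s ts k1 k2 = 0 -> klein_gap s ts m1 m2 = 0 ->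
  (forall t, In t S -> t <> s -> t <> ts -> 0 < klein_gap s t k1 k2 /\ 0 < klein_gap s t m1 m2) ->
  delaunay_adj S s ts.
Proof.
  intros Hs HS Hts Htss Hk Hm Hne Hgk Hgm Hothers.
  pose proof (klein_inH s k1 k2 Hs Hk) as Ha. pose proof (klein_inH s m1 m2 Hs Hm) as Hb.
  pose proof (klein_scale_pos _ _ Hk). pose proof (klein_scale_pos _ _ Hm).
  assert (Hab : klein s k1 k2 <> klein s m1 m2)
    by (intros E; destruct (klein_inj s k1 k2 m1 m2 Hs Hk Hm E); tauto).
  split; auto. exists (klein s k1 k2), (klein s m1 m2).
  refine (conj Ha (conj Hb (conj Hab _))). intros z Hseg. pose proof (proj1 Hseg) as Hz.
  destruct (hsegment_combination s _ _ z Hs Ha Hb Hab Hseg) as [al [be [Hal [Hbe [Hpos [Z0 [Z1 Z2]]]]]]].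
  (* the bisector functions are linear in hyperboloid coordinates *)
  assert (Hbis : forall t, bisector s t z =
            al * (klein_gap s t k1 k2 / klein_scale k1 k2) + be * (klein_gap s t m1 m2 / klein_scale m1 m2)).
  { intros t. rewrite <- (bisector_klein s t k1 k2), <- (bisector_klein s t m1 m2) by auto.
    unfold bisector. rewrite Z0, Z1, Z2. ring. }
  assert (Hpos_other : forall t, In t S -> t <> s -> t <> ts -> 0 < bisector s t z).
  { intros t Ht Hts' Htts. destruct (Hothers t Ht Hts' Htts).
    assert (0 < klein_gap s t k1 k2 / klein_scale k1 k2) by (apply Rdiv_lt_0_compat; auto).
    assert (0 < klein_gap s t m1 m2 / klein_scale m1 m2) by (apply Rdiv_lt_0_compat; auto).
    rewrite Hbis. destruct (Rle_lt_dec al 0); nra. }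
  assert (Hzero : bisector s ts z = 0) by (rewrite Hbis, Hgk, Hgm; unfold Rdiv; ring).
  split.
  - apply hclosure_cell_of_bisector_nonneg; auto. intros t Ht Hts'.
    destruct (pt_eq_dec t ts) as [->|Htts]; [lra |]. left; auto.
  - apply hclosure_cell_of_bisector_zero with s; auto.
Qed.

(** * A Delaunay neighbour in every direction *)

Lemma bounded_cell_blocked (S : list pt) (s : pt) (c0 s0 : R) :
  inH s -> (forall t, In t S -> inH t) -> bounded_cell S s -> c0 * c0 + s0 * s0 = 1 ->
  exists t, In t S /\ t <> s /\ klein_gap s t c0 s0 < 0.
Proof.
  intros Hs HS [M HM] Hu. apply NNPP. intros Hnone.
  assert (Hopen : forall t, In t S -> t <> s -> 0 <= klein_gap s t c0 s0).
  { intros t Ht Hts. apply Rnot_lt_le. intros Hlt. apply Hnone. exists t; auto. }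
  set (E := exp M + 1). assert (0 < exp M) by apply exp_pos.
  set (la := 1 - / (4 * (E * E))).
  assert (Hinv : / (4 * (E * E)) * (4 * (E * E)) = 1) by (field; unfold E; lra).
  assert (0 < / (4 * (E * E))) by (apply Rinv_0_lt_compat; unfold E; nra).
  assert (Hla : 0 < la < 1) by (unfold la, E in *; nra).
  assert (Hk : (la * c0) * (la * c0) + (la * s0) * (la * s0) < 1) by nra.
  set (y := klein s (la * c0) (la * s0)).
  assert (Hy : inH y) by (now apply klein_inH).
  (* the whole Klein ray in direction (c0, s0) lies in the cell *)
  assert (Hcell : voronoi S s y).
  { split; auto. intros t Ht Hts. apply closer_iff_bisector_pos; auto.
    unfold y. rewrite bisector_klein by auto. apply Rdiv_lt_0_compat; [| now apply klein_scale_pos].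
    rewrite klein_gap_scale. pose proof (Hopen t Ht Hts). pose proof (hyp0_gt1 s t Hs (HS t Ht) Hts). nra. }
  pose proof (HM y Hcell) as Hbound. rewrite hdist_arcosh, cosh_dist_sym in Hbound.
  apply le_exp_of_arcosh_le in Hbound; [| apply cosh_dist_ge1; auto].
  change (cosh_dist y s) with (hyp0 s y) in Hbound. unfold y in Hbound.
  destruct (hyp_klein s _ _ Hs Hk) as [e0 _]. rewrite e0 in Hbound.
  pose proof (klein_scale_pos _ _ Hk) as Hl. pose proof (klein_scale_sq _ _ Hk) as Hl2.
  set (l := klein_scale (la * c0) (la * s0)) in *.
  assert (Hl2' : l * l * (E * E) <= 1 / 2) by (rewrite Hl2; unfold la in *; nra).
  assert (1 <= l * E).
  { apply (Rmult_le_reg_l (/ l)); [now apply Rinv_0_lt_compat |].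
    rewrite <- Rmult_assoc, Rinv_l; unfold E in *; lra. }
  nra.
Qed.

(* For [t <> s], the half-plane [klein_gap s t k > 0] is [{k | pole . k < 1}]. *)
Definition pole1 (s t : pt) : R := hyp1 s t / (hyp0 s t - 1).
Definition pole2 (s t : pt) : R := hyp2 s t / (hyp0 s t - 1).

Lemma klein_gap_pole (s t : pt) (k1 k2 : R) : inH s -> inH t -> t <> s ->
  klein_gap s t k1 k2 = (hyp0 s t - 1) * (1 - (pole1 s t * k1 + pole2 s t * k2)).
Proof. intros Hs Ht Hts. pose proof (hyp0_gt1 s t Hs Ht Hts). unfold klein_gap, pole1, pole2. field. lra. Qed.

Lemma pole_inj (s t t' : pt) : inH s -> inH t -> inH t' -> t <> s -> t' <> s ->
  pole1 s t = pole1 s t' -> pole2 s t = pole2 s t' -> t = t'.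
Proof.
  intros Hs Ht Ht' Hts Ht's E1 E2.
  pose proof (hyp0_gt1 s t Hs Ht Hts). pose proof (hyp0_gt1 s t' Hs Ht' Ht's).
  (* [|pole|^2 = (hyp0 + 1) / (hyp0 - 1)] determines [hyp0] *)
  assert (Hnorm : forall z, inH z -> z <> s ->
            pole1 s z * pole1 s z + pole2 s z * pole2 s z = (hyp0 s z + 1) / (hyp0 s z - 1)).
  { intros z Hz Hzs. pose proof (hyp0_gt1 s z Hs Hz Hzs). pose proof (hyp_norm s z Hs Hz).
    unfold pole1, pole2.
    replace (hyp1 s z / (hyp0 s z - 1) * (hyp1 s z / (hyp0 s z - 1)) + hyp2 s z / (hyp0 s z - 1) * (hyp2 s z / (hyp0 s z - 1)))
      with ((hyp1 s z * hyp1 s z + hyp2 s z * hyp2 s z) / ((hyp0 s z - 1) * (hyp0 s z - 1))) by (field; lra).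
    replace (hyp1 s z * hyp1 s z + hyp2 s z * hyp2 s z) with ((hyp0 s z - 1) * (hyp0 s z + 1)) by lra.
    field; lra. }
  assert (E0 : hyp0 s t = hyp0 s t').
  { pose proof (Hnorm t Ht Hts) as Nt. rewrite E1, E2, (Hnorm t' Ht' Ht's) in Nt.
    assert (Hcross : (hyp0 s t' + 1) * (hyp0 s t - 1) = (hyp0 s t + 1) * (hyp0 s t' - 1)).
    { apply (Rmult_eq_reg_r (/ ((hyp0 s t - 1) * (hyp0 s t' - 1)))); [| apply Rinv_neq_0_compat; nra].
      replace ((hyp0 s t' + 1) * (hyp0 s t - 1) * / ((hyp0 s t - 1) * (hyp0 s t' - 1)))
        with ((hyp0 s t' + 1) / (hyp0 s t' - 1)) by (field; lra).
      rewrite Nt. field; lra. }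
    lra. }
  apply (hyp_inj s t t'); auto.
  - unfold pole1 in E1. rewrite E0 in E1.
    apply Rmult_eq_reg_r in E1; [auto | apply Rinv_neq_0_compat; lra].
  - unfold pole2 in E2. rewrite E0 in E2.
    apply Rmult_eq_reg_r in E2; [auto | apply Rinv_neq_0_compat; lra].
Qed.

(* Along the Klein ray of direction [u = (c0, s0)] the bisector of [s] and [t] is met at
   parameter [1 / ray_rate]; [ray_tilt] breaks ties between bisectors met at the same point. *)
Definition ray_rate (s t : pt) (c0 s0 : R) : R := pole1 s t * c0 + pole2 s t * s0.
Definition ray_tilt (s t : pt) (c0 s0 : R) : R := pole2 s t * c0 - pole1 s t * s0.

Lemma ray_rate_tilt_inj (s t t' : pt) (c0 s0 : R) : inH s -> inH t -> inH t' -> t <> s -> t' <> s ->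
  c0 * c0 + s0 * s0 = 1 ->
  ray_rate s t c0 s0 = ray_rate s t' c0 s0 -> ray_tilt s t c0 s0 = ray_tilt s t' c0 s0 -> t = t'.
Proof.
  intros Hs Ht Ht' Hts Ht's Hu Er Et.
  assert (P1 : forall z, pole1 s z = ray_rate s z c0 s0 * c0 - ray_tilt s z c0 s0 * s0).
  { intros z. unfold ray_rate, ray_tilt. transitivity (pole1 s z * (c0 * c0 + s0 * s0)); [rewrite Hu |]; ring. }
  assert (P2 : forall z, pole2 s z = ray_rate s z c0 s0 * s0 + ray_tilt s z c0 s0 * c0).
  { intros z. unfold ray_rate, ray_tilt. transitivity (pole2 s z * (c0 * c0 + s0 * s0)); [rewrite Hu |]; ring. }
  apply (pole_inj s t t'); auto; [rewrite (P1 t), (P1 t') | rewrite (P2 t), (P2 t')]; rewrite Er, Et; reflexivity.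
Qed.

Lemma tilted_direction_in_disk (c0 s0 es ds : R) : c0 * c0 + s0 * s0 = 1 -> 1 < es ->
  exists e, 0 < e /\ forall h, 0 < h < e ->
    0 < es + h * ds /\
    (c0 - h * s0) / (es + h * ds) * ((c0 - h * s0) / (es + h * ds))
    + (s0 + h * c0) / (es + h * ds) * ((s0 + h * c0) / (es + h * ds)) < 1.
Proof.
  intros Hu Hes.
  destruct (affine_pos_near es (- ds) ltac:(lra)) as [e1 [He1 Hmu]].
  destruct (affine_pos_near (es * es - 1) (2 * es * Rabs ds + 1) ltac:(nra)) as [e2 [He2 Hsq]].
  exists (Rmin 1 (Rmin e1 e2)). split; [repeat apply Rmin_pos; lra |]. intros h Hh.
  pose proof (Rmin_l 1 (Rmin e1 e2)). pose proof (Rmin_r 1 (Rmin e1 e2)).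
  pose proof (Rmin_l e1 e2). pose proof (Rmin_r e1 e2).
  assert (Hmu' : 0 < es + h * ds) by (specialize (Hmu h ltac:(lra)); lra).
  split; auto.
  assert (Hn : (c0 - h * s0) * (c0 - h * s0) + (s0 + h * c0) * (s0 + h * c0) = 1 + h * h)
    by (transitivity ((1 + h * h) * (c0 * c0 + s0 * s0)); [ring | rewrite Hu; ring]).
  replace ((c0 - h * s0) / (es + h * ds) * ((c0 - h * s0) / (es + h * ds))
           + (s0 + h * c0) / (es + h * ds) * ((s0 + h * c0) / (es + h * ds)))
    with ((1 + h * h) / ((es + h * ds) * (es + h * ds))) by (rewrite <- Hn; field; lra).
  apply (Rmult_lt_reg_r ((es + h * ds) * (es + h * ds))); [nra |].
  unfold Rdiv. rewrite Rmult_assoc, Rinv_l, Rmult_1_r, Rmult_1_l by nra.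
  specialize (Hsq h ltac:(lra)). pose proof (Rabs_pos ds). pose proof (Rle_abs ds). pose proof (Rle_abs (- ds)).
  rewrite Rabs_Ropp in *.
  assert (0 <= es * h * (ds + Rabs ds)) by (apply Rmult_le_pos; [apply Rmult_le_pos |]; lra).
  nra.
Qed.

Lemma tilted_direction_inj (c0 s0 h1 h2 mu1 mu2 : R) : c0 * c0 + s0 * s0 = 1 -> mu1 <> 0 -> mu2 <> 0 ->
  (c0 - h1 * s0) / mu1 = (c0 - h2 * s0) / mu2 -> (s0 + h1 * c0) / mu1 = (s0 + h2 * c0) / mu2 -> h1 = h2.
Proof.
  intros Hu Hmu1 Hmu2 E1 E2.
  assert (Along : forall h mu, mu <> 0 -> c0 * ((c0 - h * s0) / mu) + s0 * ((s0 + h * c0) / mu) = / mu).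
  { intros h mu Hmu. transitivity ((c0 * c0 + s0 * s0) / mu); [field; auto | rewrite Hu; field; auto]. }
  assert (Across : forall h mu, mu <> 0 -> - s0 * ((c0 - h * s0) / mu) + c0 * ((s0 + h * c0) / mu) = h / mu).
  { intros h mu Hmu. transitivity (h * (c0 * c0 + s0 * s0) / mu); [field; auto | rewrite Hu; field; auto]. }
  assert (Emu : / mu1 = / mu2) by (rewrite <- (Along h1 mu1), <- (Along h2 mu2), E1, E2 by auto; reflexivity).
  assert (Eh : h1 / mu1 = h2 / mu2) by (rewrite <- (Across h1 mu1), <- (Across h2 mu2), E1, E2 by auto; reflexivity).
  assert (mu1 = mu2) as <- by (rewrite <- (Rinv_inv mu1), <- (Rinv_inv mu2), Emu; reflexivity).
  unfold Rdiv in Eh. apply Rmult_eq_reg_r in Eh; auto. apply Rinv_neq_0_compat; auto.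
Qed.

Lemma tilted_klein_chord (S : list pt) (s ts : pt) (c0 s0 : R) :
  inH s -> (forall t, In t S -> inH t) -> In ts S -> ts <> s -> c0 * c0 + s0 * s0 = 1 ->
  1 < ray_rate s ts c0 s0 ->
  (forall t, In t S -> t <> s ->
     ray_rate s t c0 s0 < ray_rate s ts c0 s0 \/
     (ray_rate s t c0 s0 = ray_rate s ts c0 s0 /\ ray_tilt s t c0 s0 <= ray_tilt s ts c0 s0)) ->
  exists e, 0 < e /\ forall h, 0 < h < e ->
    let mu := ray_rate s ts c0 s0 + h * ray_tilt s ts c0 s0 in
    let k1 := (c0 - h * s0) / mu in let k2 := (s0 + h * c0) / mu in
    0 < mu /\ k1 * k1 + k2 * k2 < 1 /\ klein_gap s ts k1 k2 = 0 /\
    forall t, In t S -> t <> s -> t <> ts -> 0 < klein_gap s t k1 k2.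
Proof.
  intros Hs HS Hts Htss Hu Hes Hmax.
  set (es := ray_rate s ts c0 s0) in *. set (ds := ray_tilt s ts c0 s0) in *.
  destruct (eventually_forall_in pt S (fun t h => t <> s -> t <> ts ->
              ray_rate s t c0 s0 + h * ray_tilt s t c0 s0 < es + h * ds)) as [e1 [He1 Hbelow]].
  { intros t Ht. destruct (pt_eq_dec t s) as [->|Hts']; [exists 1; split; [lra | congruence] |].
    destruct (Hmax t Ht Hts') as [Hlt|[Heq Hle]].
    - destruct (affine_pos_near (es - ray_rate s t c0 s0) (ray_tilt s t c0 s0 - ds) ltac:(lra))
        as [e [He Hpos]].
      exists e. split; auto. intros h Hh _ _. specialize (Hpos h Hh). lra.
    - exists 1. split; [lra |]. intros h Hh _ Htts.
      assert (ray_tilt s t c0 s0 <> ds)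
        by (intros E; apply Htts; apply (ray_rate_tilt_inj s t ts c0 s0); auto).
      destruct Hle as [Hlt|]; [| contradiction].
      assert (h * ray_tilt s t c0 s0 < h * ds) by (apply Rmult_lt_compat_l; lra).
      lra. }
  destruct (tilted_direction_in_disk c0 s0 es ds Hu Hes) as [e2 [He2 Hdisk]].
  exists (Rmin e1 e2). split; [now apply Rmin_pos |]. intros h Hh mu k1 k2.
  pose proof (Rmin_l e1 e2). pose proof (Rmin_r e1 e2).
  destruct (Hdisk h ltac:(lra)) as [Hmu Hk].
  assert (Hpole : forall t, pole1 s t * k1 + pole2 s t * k2 = (ray_rate s t c0 s0 + h * ray_tilt s t c0 s0) / mu)
    by (intros t; unfold k1, k2, mu in *; unfold ray_rate, ray_tilt; field; lra).
  split; [| split; [| split]]; auto.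
  - rewrite klein_gap_pole, Hpole by auto. unfold mu, es, ds in *. unfold Rdiv. rewrite Rinv_r by lra. ring.
  - intros t Ht Hts' Htts. rewrite klein_gap_pole, Hpole by auto.
    pose proof (hyp0_gt1 s t Hs (HS t Ht) Hts'). pose proof (Hbelow t Ht h ltac:(lra) Hts' Htts).
    apply Rmult_lt_0_compat; [lra |].
    assert ((ray_rate s t c0 s0 + h * ray_tilt s t c0 s0) / mu < 1); [| lra].
    apply (Rmult_lt_reg_r mu); auto. unfold Rdiv. unfold mu in *. rewrite Rmult_assoc, Rinv_l by lra. lra.
Qed.

Lemma direction_covered (S : list pt) (s : pt) (c0 s0 : R) :
  inH s -> (forall t, In t S -> inH t) -> bounded_cell S s -> c0 * c0 + s0 * s0 = 1 ->
  exists t, In t S /\ delaunay_adj S s t /\ hyp0 s t - 1 <= hyp1 s t * c0 + hyp2 s t * s0.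
Proof.
  intros Hs HS Hb Hu.
  destruct (bounded_cell_blocked S s c0 s0 Hs HS Hb Hu) as [t1 [Ht1 [Ht1s Hgap1]]].
  assert (Hrate1 : 1 < ray_rate s t1 c0 s0).
  { rewrite klein_gap_pole in Hgap1 by auto. pose proof (hyp0_gt1 s t1 Hs (HS t1 Ht1) Ht1s).
    unfold ray_rate. nra. }
  destruct (exists_lex_max pt S (fun t => t <> s) (fun t => ray_rate s t c0 s0) (fun t => ray_tilt s t c0 s0))
    as [ts [Hts [Htss Hmax]]]; [eauto |].
  assert (Hes : 1 < ray_rate s ts c0 s0) by (destruct (Hmax t1 Ht1 Ht1s) as [|[]]; lra).
  destruct (tilted_klein_chord S s ts c0 s0 Hs HS Hts Htss Hu Hes Hmax) as [e [He Hchord]].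
  destruct (Hchord (e / 3) ltac:(lra)) as [Hmu1 [Hk1 [Hg1 Hpos1]]].
  destruct (Hchord (2 * e / 3) ltac:(lra)) as [Hmu2 [Hk2 [Hg2 Hpos2]]].
  exists ts. split; [| split]; auto.
  - apply (delaunay_adj_of_klein_chord S s ts _ _ _ _ Hs HS Hts Htss Hk1 Hk2); auto.
    intros [E1 E2]. apply tilted_direction_inj in E1; auto; lra.
  - pose proof (klein_gap_pole s ts c0 s0 Hs (HS ts Hts) Htss) as Hgap.
    pose proof (hyp0_gt1 s ts Hs (HS ts Hts) Htss). unfold klein_gap, ray_rate in *. nra.
Qed.

Theorem lemma12 (r : R) (S : list pt) :
  0 < r ->
  NoDup S ->
  (forall s, In s S -> inH s) ->
  (forall s t, In s S -> In t S -> s <> t -> 2 * r <= hdist s t) ->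
  forall s, In s S -> bounded_cell S s ->
  forall L : list pt, NoDup L ->
    (forall t, In t L <-> (In t S /\ delaunay_adj S s t)) ->
    exp r <= INR (length L).
Proof.
  intros Hr _ HS Hsep s Hs Hb L _ HL. pose proof (HS s Hs) as HsH.
  apply (caps_cover_circle_length pt L (hyp0 s) (hyp1 s) (hyp2 s) (exp r)).
  - rewrite <- exp_0. apply exp_increasing. lra.
  - intros t Ht. apply HL in Ht as [Ht [Hst _]]. split; [apply hyp_norm; auto |].
    pose proof (Hsep s t Hs Ht Hst) as Hdist.
    rewrite hdist_arcosh, cosh_dist_sym in Hdist.
    apply cosh_le_of_le_arcosh in Hdist; [| lra | apply cosh_dist_ge1; auto].
    unfold cosh in Hdist. rewrite exp_Ropp in Hdist.
    replace (2 * r) with (r + r) in Hdist by ring. rewrite exp_plus in Hdist. exact Hdist.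
  - intros c0 s0 Hu.
    destruct (direction_covered S s c0 s0 HsH HS Hb Hu) as [t [Ht [Hadj Hcap]]].
    exists t. split; [apply HL |]; auto.
Qed.
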